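(* Let $k$ be a positive integer and $c > 0$. In any election, a committee $S$ of size $k$ is $c$-stable if and only if it is $\frac{c}{k}$-undominated.
   Context: An election consists of a finite set $V$ of $n$ voters, a finite set $C$ of candidates, and for each voter $v$ a strict linear order $\succ_v$ on $C$. A committee is a nonempty subset $S \subseteq C$. Voter $v$ strongly prefers committee $S'$ over committee $S$ (written $S' \succ_v S$) if $v$ prefers her favorite candidate in $S'$ over her favorite candidate in $S$; for a single candidate $a$, $a \succ_v S$ means $\{a\} \succ_v S$, i.e., $v$ prefers $a$ to every member of $S$. A committee $S$ of size $k$ is $c$-stable if for every committee $S'$ of size $k'$, the fraction of voters $v$ with $S' \succ_v S$ is less than $c \cdot \frac{k'}{k}$. A committee $S$ is $\alpha$-undominated if for every candidate $a \in C$, the fraction of voters $v$ with $a \succ_v S$ is less than $\alpha$. *)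

From HB Require Import structures.
From mathcomp Require Import all_boot all_order all_algebra.
Set Implicit Arguments. Unset Strict Implicit. Unset Printing Implicit Defensive.
Import Order.TTheory GRing.Theory Num.Theory.
Local Open Scope ring_scope.

(* A strict linear order on C given as a boolean relation: [r a b] means a is
   strictly preferred to b. *)
Definition strict_linear_order (C : finType) (r : rel C) : Prop :=
  [/\ (forall a, ~~ r a a),
      (forall a b d, r a b -> r b d -> r a d) &
      (forall a b, a != b -> r a b || r b a)].

Section Election.
Variables (V C : finType) (pref : V -> rel C).

Definition favorite (v : V) (S : {set C}) (a : C) : bool :=
  (a \in S) && [forall b in S, (b != a) ==> pref v a b].

Definition strongly_prefers (v : V) (S' S : {set C}) : bool :=
  [exists a', exists a, [&& favorite v S' a', favorite v S a & pref v a' a]].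

Definition frac_prefer (R : realFieldType) (S' S : {set C}) : R :=
  #|[set v | strongly_prefers v S' S ]|%:R / #|V|%:R.

Definition committee (S : {set C}) : Prop := S != set0.

Definition c_stable (R : realFieldType) (c : R) (S : {set C}) : Prop :=
  forall S' : {set C}, committee S' ->
    frac_prefer R S' S < c * (#|S'|%:R / #|S|%:R).

Definition undominated (R : realFieldType) (alpha : R) (S : {set C}) : Prop :=
  forall a : C, frac_prefer R [set a] S < alpha.
End Election.

From HB Require Import structures.
From mathcomp Require Import all_boot all_order all_algebra.
Import Order.TTheory GRing.Theory Num.Theory.
Local Open Scope ring_scope.

(* A voter who strongly prefers S' to S already strongly prefers her favorite
   member of S' to S, so the voters deviating to S' are covered by the voters
   deviating to the single candidates of S'. Undominatedness bounds each of
   these |S'| fractions by c/k, hence their sum by c|S'|/k; conversely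
   c-stability applied to singletons is exactly (c/k)-undominatedness. *)

Lemma leq_card_bigcup {I T : finType} (A : {set I}) (F : I -> {set T}) :
  (#|\bigcup_(i in A) F i| <= \sum_(i in A) #|F i|)%N.
Proof.
elim/big_rec2: _ => [|i n U _ IH]; first by rewrite cards0.
by rewrite (leq_trans (leq_card_setU _ _)) // leq_add2l.
Qed.

Section Election.
Variables (V C : finType) (pref : V -> rel C) (R : realFieldType).

Lemma favorite_set1 (v : V) (a : C) : favorite pref v [set a] a.
Proof.
rewrite /favorite set11 /=.
by apply/forall_inP => b /set1P ->; rewrite eqxx.
Qed.

Lemma strongly_prefers_set1 (v : V) (S' S : {set C}) :
  strongly_prefers pref v S' S ->
  exists2 a, a \in S' & strongly_prefers pref v [set a] S.
Proof.
case/existsP => a' /existsP [a /and3P [/andP [a'S' _] fa pa]].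
exists a' => //; apply/existsP; exists a'; apply/existsP; exists a.
by rewrite favorite_set1 fa pa.
Qed.

Lemma strongly_prefers_sub_bigcup (S' S : {set C}) :
  [set v | strongly_prefers pref v S' S] \subset
  \bigcup_(a in S') [set v | strongly_prefers pref v [set a] S].
Proof.
apply/subsetP => v; rewrite inE => /strongly_prefers_set1 [a aS' pa].
by apply/bigcupP; exists a; rewrite ?inE.
Qed.

Lemma frac_prefer_le_sum (S' S : {set C}) :
  frac_prefer pref R S' S <= \sum_(a in S') frac_prefer pref R [set a] S.
Proof.
rewrite /frac_prefer -mulr_suml ler_wpM2r ?invr_ge0 ?ler0n // -natr_sum ler_nat.
exact: leq_trans (subset_leq_card (strongly_prefers_sub_bigcup S' S))
                 (leq_card_bigcup _ _).
Qed.

Lemma c_stable_undominated (c : R) (S : {set C}) :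
  c_stable pref c S -> undominated pref (c / #|S|%:R) S.
Proof.
move=> stableS a; have := stableS [set a]; rewrite cards1 mul1r; apply.
by apply/set0Pn; exists a; rewrite set11.
Qed.

Lemma undominated_c_stable (c : R) (S : {set C}) :
  undominated pref (c / #|S|%:R) S -> c_stable pref c S.
Proof.
move=> undomS S' /set0Pn [a0 a0S'].
apply: le_lt_trans (frac_prefer_le_sum S' S) _.
have -> : c * (#|S'|%:R / #|S|%:R) = \sum_(a in S') c / #|S|%:R.
  by rewrite sumr_const -[c / _ *+ _]mulr_natr mulrAC mulrA.
apply: ltr_sum => [|a _]; last exact: undomS.
by apply/hasP; exists a0; rewrite ?mem_index_enum.
Qed.

End Election.

Theorem proposition1 (R : realFieldType) (V C : finType) (pref : V -> rel C)
  (Hpref : forall v, strict_linear_order (pref v))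
  (k : nat) (c : R) (S : {set C}) :
  (0 < k)%N -> 0 < c -> committee S -> #|S| = k ->
  (c_stable pref c S <-> undominated pref (c / k%:R) S).
Proof.
(* None of [0 < k], [0 < c], [committee S] and [Hpref] is needed:
   [strongly_prefers] already provides the favorites the argument uses. *)
move=> _ _ _ <-; split; [exact: c_stable_undominated | exact: undominated_c_stable].
Qed.
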